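(* Let $K$ be a field of characteristic $0$ such that $K_{\mathrm{ab}}/\mathbb{Q}$ has finite degree, and let $\Lambda$ be its Chevalley–Bass number. (i) $\Lambda$ is the smallest positive integer $L$ such that, for every integer $n>0$, the image of the inflation map $H^1(G_{Ln},\mu_{Ln})\to H^1(K,\mu_{Ln})$ lies in the image of the map $H^1(K,\mu_L)\to H^1(K,\mu_{Ln})$ induced by the inclusion $\mu_L\subseteq\mu_{Ln}$. (ii) $\Lambda$ is the smallest positive integer $L$ such that, for every integer $n>0$, the map $H^1(G_{Ln},\mu_L)\to H^1(G_{Ln},\mu_{Ln})$ induced by the inclusion $\mu_L\subseteq\mu_{Ln}$ is surjective.
   Context: $K_{\mathrm{ab}}$ is the maximal abelian subextension of $K/\mathbb{Q}$. The Chevalley–Bass number of $K$ is the smallest positive integer $\Lambda$ such that for every positive integer $n$, $(K(\zeta_{\Lambda n})^\times)^{\Lambda n}\cap K^\times\subseteq (K^\times)^n$. $\mu_n$ denotes the Galois module of $n$th roots of unity in an algebraic closure of $K$, $\zeta_n$ a primitive $n$th root of unity, $G_n:=\mathrm{Gal}(K(\zeta_n)/K)$; $H^1(K,M)$ denotes Galois cohomology of the absolute Galois group of $K$. *)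

From HB Require Import structures.
From mathcomp Require Import all_boot all_order all_algebra.
Set Implicit Arguments. Unset Strict Implicit. Unset Printing Implicit Defensive.
Import Order.TTheory GRing.Theory Num.Theory.
Local Open Scope ring_scope.

(* Setting: K a field, L an algebraically closed field, iota : K -> L a
   ring embedding with L algebraic over iota(K); so L is an algebraic
   closure of K and the absolute Galois group of K is the group of field
   automorphisms of L fixing iota(K) pointwise. *)

Definition algebraic_over (K : fieldType) (L : closedFieldType)
  (iota : {rmorphism K -> L}) : Prop :=
  forall y : L, exists p : {poly K}, p != 0 /\ root (map_poly iota p) y.

(* Q(x)/Q is a (finite) abelian Galois extension, x in K algebraic over Q:
   p = minimal polynomial of x over Q (monic irreducible), every conjugate of x
   (root of p in the algebraic closure L) is g(x) for some g in Q[X]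
   (normality), and the automorphisms x |-> g1(x), x |-> g2(x) commute. *)
Definition abelian_elt (K : fieldType) (L : closedFieldType)
  (iota : {rmorphism K -> L}) (x : K) : Prop :=
  exists p : {poly rat},
    [/\ p \is monic, irreducible_poly p, root (map_poly ratr p) x,
        (forall r : L, root (map_poly ratr p) r ->
           exists g : {poly rat}, r = iota (map_poly ratr g).[x])
      & (forall g1 g2 : {poly rat},
           root (map_poly ratr p) (map_poly ratr g1).[x] ->
           root (map_poly ratr p) (map_poly ratr g2).[x] ->
           (map_poly ratr g1).[(map_poly ratr g2).[x]] =
           (map_poly ratr g2).[(map_poly ratr g1).[x]] :> K)].

(* K_ab = maximal abelian subextension of K/Q = set of x generating an abelian
   extension of Q; it has finite degree over Q iff it is spanned over Q by a
   finite family of elements. *)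
Definition Kab_finite (K : fieldType) (L : closedFieldType)
  (iota : {rmorphism K -> L}) : Prop :=
  exists s : seq K, forall y : K, abelian_elt iota y ->
    exists c : 'I_(size s) -> rat, y = \sum_(i < size s) ratr (c i) * s`_i.

Definition in_Kzeta (K : fieldType) (L : closedFieldType)
  (iota : {rmorphism K -> L}) (m : nat) (y : L) : Prop :=
  exists z : L, m.-primitive_root z /\
    exists p : {poly K}, y = (map_poly iota p).[z].

(* (K(zeta_{Ln})^x)^{Ln} ∩ K^x ⊆ (K^x)^n for all n > 0 *)
Definition CB_prop (K : fieldType) (L : closedFieldType)
  (iota : {rmorphism K -> L}) (Lam : nat) : Prop :=
  (0 < Lam)%N /\
  forall n : nat, (0 < n)%N ->
    forall (y : L) (a : K), in_Kzeta iota (Lam * n) y -> y != 0 ->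
      y ^+ (Lam * n) = iota a -> exists b : K, a = b ^+ n.

Definition is_CB_number (K : fieldType) (L : closedFieldType)
  (iota : {rmorphism K -> L}) (Lam : nat) : Prop :=
  CB_prop iota Lam /\ forall M : nat, CB_prop iota M -> (Lam <= M)%N.

Definition isGal (K : fieldType) (L : closedFieldType)
  (iota : {rmorphism K -> L}) (sigma : L -> L) : Prop :=
  [/\ forall x y, sigma (x + y) = sigma x + sigma y,
      forall x y, sigma (x * y) = sigma x * sigma y,
      sigma 1 = 1, bijective sigma & forall a : K, sigma (iota a) = iota a].

Definition cocycle (K : fieldType) (L : closedFieldType)
  (iota : {rmorphism K -> L}) (m : nat) (f : (L -> L) -> L) : Prop :=
  (forall sigma, isGal iota sigma -> f sigma ^+ m = 1) /\
  (forall sigma tau, isGal iota sigma -> isGal iota tau ->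
     f (sigma \o tau) = f sigma * sigma (f tau)).

(* continuity (= local constancy) for the Krull topology: f is constant on
   cosets of the pointwise stabilizer of some finite set of elements of L *)
Definition continuous_coc (K : fieldType) (L : closedFieldType)
  (iota : {rmorphism K -> L}) (f : (L -> L) -> L) : Prop :=
  exists xs : seq L, forall sigma tau, isGal iota sigma -> isGal iota tau ->
    (forall x, x \in xs -> sigma x = tau x) -> f sigma = f tau.

Definition Z1K (K : fieldType) (L : closedFieldType)
  (iota : {rmorphism K -> L}) (m : nat) (f : (L -> L) -> L) : Prop :=
  cocycle iota m f /\ continuous_coc iota f.

(* f factors through the quotient G_K -> G_N = Gal(K(zeta_N)/K), i.e. f is
   the inflation of a function on G_N *)
Definition factors_GN (K : fieldType) (L : closedFieldType)
  (iota : {rmorphism K -> L}) (N : nat) (f : (L -> L) -> L) : Prop :=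
  forall z : L, N.-primitive_root z ->
    forall sigma tau, isGal iota sigma -> isGal iota tau ->
      sigma z = tau z -> f sigma = f tau.

Definition cohom (K : fieldType) (L : closedFieldType)
  (iota : {rmorphism K -> L}) (m : nat) (f g : (L -> L) -> L) : Prop :=
  exists a : L, a ^+ m = 1 /\
    forall sigma, isGal iota sigma -> f sigma = g sigma * (sigma a / a).

Definition prop_i (K : fieldType) (L : closedFieldType)
  (iota : {rmorphism K -> L}) (Lm : nat) : Prop :=
  (0 < Lm)%N /\
  forall n : nat, (0 < n)%N ->
    forall f, cocycle iota (Lm * n) f -> factors_GN iota (Lm * n) f ->
      exists g, Z1K iota Lm g /\ cohom iota (Lm * n) f g.

(* (ii): H^1(G_{Ln}, mu_L) -> H^1(G_{Ln}, mu_{Ln}) is surjective; cocycles of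
   G_N are represented by their inflations to G_K *)
Definition prop_ii (K : fieldType) (L : closedFieldType)
  (iota : {rmorphism K -> L}) (Lm : nat) : Prop :=
  (0 < Lm)%N /\
  forall n : nat, (0 < n)%N ->
    forall f, cocycle iota (Lm * n) f -> factors_GN iota (Lm * n) f ->
      exists g, [/\ cocycle iota Lm g, factors_GN iota (Lm * n) g &
                    cohom iota (Lm * n) f g].

(* Everything is Kummer theory over K(zeta_N), N = M n.  A cocycle f on G_N
   with values in mu_N is split by Hilbert 90 (a Lagrange resolvent):
   f(s) = s(b)/b with b in K(zeta_N), and b^N = a lies in K.  If M has the
   Chevalley-Bass property then a = c^n with c in K, so (b^M/c)^n = 1 gives
   b^M/c = eta^M for an N-th root of unity eta, and d = b/eta has d^M = c:
   f is cohomologous to the mu_M-valued cocycle s |-> s(d)/d, which is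
   continuous and factors through G_N.  Conversely, for y in K(zeta_N) with
   y^N = a in K, if s |-> s(y)/y is cohomologous to a mu_M-valued cocycle via
   c in mu_N, then w = y/c has w^M in K and a = (w^M)^n.  Hence the
   Chevalley-Bass condition, (i) and (ii) hold for the same integers.
   The descent "Galois-invariant elements of L lie in K" is Artin's theorem,
   proved by extending partial K-embeddings with Zorn's lemma. *)

From HB Require Import structures.
From mathcomp Require Import all_boot all_order all_algebra all_field cyclic.
From mathcomp Require Import boolp classical_sets zify ring.
Set Implicit Arguments. Unset Strict Implicit. Unset Printing Implicit Defensive.
Import GRing.Theory.
Local Open Scope ring_scope.

Section AlgebraicClosure.
Variables (K : fieldType) (L : closedFieldType) (iota : {rmorphism K -> L}).

Lemma subring_horner (E : L -> Prop) :
  (forall a, E (iota a)) -> (forall x y, E x -> E y -> E (x + y)) ->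
  (forall x y, E x -> E y -> E (x * y)) ->
  forall (p : {poly K}) x, E x -> E (map_poly iota p).[x].
Proof.
move=> E_iota E_add E_mul p x Ex; elim/poly_ind: p => [|p c IH].
  by rewrite rmorph0 horner0 -(rmorph0 iota).
rewrite rmorphD rmorphM /= map_polyX map_polyC /= hornerMXaddC.
by apply: E_add; [apply: E_mul|].
Qed.

Hypothesis algL : algebraic_over iota.

Lemma annihilator_coef0_neq0 x : x != 0 ->
  exists p : {poly K}, p.[0] != 0 /\ root (map_poly iota p) x.
Proof.
move=> x0; have [p [+ +]] := algL x.
elim: {p}(size p) {-2}p (leqnn (size p)) => [|n IH] p.
  by rewrite leqn0 size_poly_eq0 => /eqP ->; rewrite eqxx.
move=> sp pn0 rp; have [p00|] := eqVneq p.[0] 0; last by exists p.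
have /factor_theorem [q Dq] : root p 0 by apply/eqP.
rewrite subr0 in Dq.
have qn0 : q != 0 by apply: contraNneq pn0 => q0; rewrite Dq q0 mul0r.
apply: (IH q) => //; first by move: sp; rewrite Dq size_mulX // ltnS.
by move: rp; rewrite Dq /root rmorphM /= map_polyX hornerMX mulf_eq0 (negPf x0) orbF.
Qed.

(* If [p = q X + c] annihilates [x] with [c != 0], then [x^-1 = - q(x) / c]. *)
Lemma subring_inv (E : L -> Prop) :
  (forall a, E (iota a)) -> (forall x y, E x -> E y -> E (x + y)) ->
  (forall x y, E x -> E y -> E (x * y)) ->
  forall x, E x -> x != 0 -> E x^-1.
Proof.
move=> E_iota E_add E_mul x Ex x0.
have [p [c0 rp]] := annihilator_coef0_neq0 x0; set c := p.[0] in c0.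
have /factor_theorem [q Dq] : root (p - c%:P) 0.
  by rewrite /root hornerD hornerN hornerC subrr.
rewrite subr0 in Dq; have Dp : p = q * 'X + c%:P by rewrite -Dq subrK.
move: rp; rewrite Dp /root rmorphD rmorphM /= map_polyX map_polyC /= hornerMXaddC.
move=> /eqP qx.
have -> : x^-1 = (map_poly iota q).[x] * iota (- c^-1).
  have ic0 : iota c != 0 by rewrite fmorph_eq0.
  have e : (map_poly iota q).[x] * x = - iota c by apply/eqP; rewrite -subr_eq0 opprK qx.
  rewrite rmorphN fmorphV /= mulrN; apply: (mulIf x0).
  by rewrite mulVf // mulNr mulrAC e mulNr opprK mulfV.
by apply: (E_mul); [exact: (subring_horner E_iota E_add E_mul)|exact: E_iota].
Qed.

Section KHomomorphism.
Variable s : L -> L.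
Hypotheses (sD : forall x y, s (x + y) = s x + s y) (sM : forall x y, s (x * y) = s x * s y)
  (s1 : s 1 = 1) (si : forall a, s (iota a) = iota a).

Lemma khom0 : s 0 = 0.
Proof. by rewrite -(rmorph0 iota) si. Qed.

Lemma khomN x : s (- x) = - s x.
Proof. by apply/eqP; rewrite -subr_eq0 opprK -sD addNr khom0. Qed.

Lemma khomX x n : s (x ^+ n) = s x ^+ n.
Proof. by elim: n => [|n IH]; rewrite ?expr0 ?s1 // !exprS sM IH. Qed.

Lemma khom_horner (p : {poly K}) w : s (map_poly iota p).[w] = (map_poly iota p).[s w].
Proof.
elim/poly_ind: p => [|p c IH]; first by rewrite rmorph0 !horner0 khom0.
by rewrite rmorphD rmorphM /= map_polyX map_polyC /= !hornerMXaddC sD sM IH si.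
Qed.

Lemma khom_inj : injective s.
Proof.
move=> u v e; apply/eqP; rewrite -subr_eq0; apply/negPn/negP => h.
have : s (u - v) * s ((u - v)^-1) = 1 by rewrite -sM mulfV.
by rewrite sD khomN e subrr mul0r => /eqP; rewrite eq_sym oner_eq0.
Qed.

(* [s] permutes the finitely many roots of an annihilating polynomial of [z]. *)
Lemma khom_surj z : exists w, s w = z.
Proof.
have [p [pn0 rpz]] := algL z; set P := map_poly iota p.
have [rs Prs] := closed_field_poly_normal P.
have lc0 : lead_coef P != 0 by rewrite lead_coef_eq0 map_poly_eq0.
have rootE w : root P w = (w \in rs).
  by rewrite Prs /root hornerZ mulf_eq0 (negPf lc0) /= -/(root _ w) root_prod_XsubC.
set t := undup rs.
have [_ e] : ((size (map s t) = size t) * (map s t =i t))%type.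
  apply: uniq_min_size; last by rewrite size_map.
  - by rewrite map_inj_uniq ?undup_uniq //; apply: khom_inj.
  - move=> w /mapP [u]; rewrite !mem_undup -!rootE => /eqP rPu ->.
    by rewrite /root /P -khom_horner rPu khom0.
have : z \in map s t by rewrite e mem_undup -rootE.
by case/mapP=> w _ ->; exists w.
Qed.

End KHomomorphism.

Lemma isGal_khom (s : L -> L) :
  (forall x y, s (x + y) = s x + s y) -> (forall x y, s (x * y) = s x * s y) ->
  s 1 = 1 -> (forall a, s (iota a) = iota a) -> isGal iota s.
Proof.
move=> sD sM s1 si; split => //.
pose g z := xget 0 (fun w => s w = z).
have sg z : s (g z) = z by have := @xgetPex _ 0 (fun w => s w = z) (khom_surj sD sM s1 si z).
by exists g => [w|z]; [apply: (khom_inj sD sM s1 si); exact: sg|exact: sg].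
Qed.

(* Graph of a partial ring map [L -> L] fixing [iota K]; its domain is a subring. *)
Definition partial_khom (G : L * L -> Prop) :=
  [/\ (forall x y1 y2, G (x, y1) -> G (x, y2) -> y1 = y2),
      (forall a, G (iota a, iota a)) &
      (forall x1 y1 x2 y2, G (x1, y1) -> G (x2, y2) ->
          G (x1 + x2, y1 + y2) /\ G (x1 * x2, y1 * y2))].

Section PartialKHom.
Variable G : L * L -> Prop.
Hypothesis hG : partial_khom G.

Definition pdom x := exists y, G (x, y).
Definition pfun x := xget 0 (fun y => G (x, y)).

Lemma pfunP x : pdom x -> G (x, pfun x).
Proof. exact: (@xgetPex _ 0 (fun y => G (x, y))). Qed.

Lemma pfun_eq x y : G (x, y) -> pfun x = y.
Proof. by case: hG => f _ _ h; apply: (f x); [apply: pfunP; exists y|]. Qed.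

Lemma pdom_iota a : pdom (iota a).
Proof. by case: hG => _ hi _; exists (iota a). Qed.

Lemma pfun_iota a : pfun (iota a) = iota a.
Proof. by case: hG => _ hi _; apply: pfun_eq. Qed.

Lemma pdomD x y : pdom x -> pdom y -> pdom (x + y).
Proof. by case: hG => _ _ hc [u hu] [v hv]; exists (u + v); case: (hc _ _ _ _ hu hv). Qed.

Lemma pdomM x y : pdom x -> pdom y -> pdom (x * y).
Proof. by case: hG => _ _ hc [u hu] [v hv]; exists (u * v); case: (hc _ _ _ _ hu hv). Qed.

Lemma pfunD x y : pdom x -> pdom y -> pfun (x + y) = pfun x + pfun y.
Proof.
move=> dx dy; apply: pfun_eq; case: hG => _ _ hc.
by case: (hc _ _ _ _ (pfunP dx) (pfunP dy)).
Qed.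

Lemma pfunM x y : pdom x -> pdom y -> pfun (x * y) = pfun x * pfun y.
Proof.
move=> dx dy; apply: pfun_eq; case: hG => _ _ hc.
by case: (hc _ _ _ _ (pfunP dx) (pfunP dy)).
Qed.

Lemma pdom0 : pdom 0. Proof. by rewrite -(rmorph0 iota); apply: pdom_iota. Qed.
Lemma pdom1 : pdom 1. Proof. by rewrite -(rmorph1 iota); apply: pdom_iota. Qed.
Lemma pfun0 : pfun 0 = 0. Proof. by rewrite -(rmorph0 iota) pfun_iota. Qed.
Lemma pfun1 : pfun 1 = 1. Proof. by rewrite -(rmorph1 iota) pfun_iota. Qed.

Lemma pdomN x : pdom x -> pdom (- x).
Proof. by move=> dx; rewrite -mulrN1 -(rmorphN1 iota); apply: pdomM dx (pdom_iota _). Qed.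

Lemma pdomMn x n : pdom x -> pdom (x *+ n).
Proof. by move=> dx; rewrite -mulr_natr -(rmorph_nat iota); apply: pdomM dx (pdom_iota _). Qed.

Lemma pfunN x : pdom x -> pfun (- x) = - pfun x.
Proof.
move=> dx; rewrite -mulrN1 -(rmorphN1 iota) pfunM //; last exact: pdom_iota.
by rewrite pfun_iota rmorphN1 mulrN1.
Qed.

Lemma pdomV x : pdom x -> pdom x^-1.
Proof.
move=> dx; have [->|x0] := eqVneq x 0; first by rewrite invr0; exact: pdom0.
exact: (subring_inv pdom_iota pdomD pdomM dx x0).
Qed.

Lemma pdom_sum (I : Type) (r : seq I) (P : pred I) (F : I -> L) :
  (forall i, P i -> pdom (F i)) -> pdom (\sum_(i <- r | P i) F i).
Proof. by move=> hF; apply: big_ind => //; [exact: pdom0|exact: pdomD]. Qed.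

Lemma pfun_sum (I : Type) (r : seq I) (P : pred I) (F : I -> L) :
  (forall i, P i -> pdom (F i)) ->
  pfun (\sum_(i <- r | P i) F i) = \sum_(i <- r | P i) pfun (F i).
Proof.
move=> hF; apply: (proj2 (big_ind2 (fun x y => pdom x /\ pfun x = y) _ _ _)).
- by split; [apply: pdom0|apply: pfun0].
- by move=> x1 x2 y1 y2 [d1 e1] [d2 e2]; split; [apply: pdomD|rewrite pfunD // e1 e2].
- by move=> i Pi; split; [apply: hF|].
Qed.

Definition pdom_poly (p : {poly L}) := forall i, pdom p`_i.
Definition pfun_poly (p : {poly L}) : {poly L} := \poly_(i < size p) pfun p`_i.

Lemma coef_pfun_poly p i : (pfun_poly p)`_i = pfun p`_i.
Proof. by rewrite coef_poly; case: ltnP => // h; rewrite nth_default // pfun0. Qed.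

Lemma pdom_poly0 : pdom_poly 0.
Proof. by move=> i; rewrite coef0; exact: pdom0. Qed.
Lemma pdom_polyD p q : pdom_poly p -> pdom_poly q -> pdom_poly (p + q).
Proof. by move=> hp hq i; rewrite coefD; apply: pdomD. Qed.
Lemma pdom_polyN p : pdom_poly p -> pdom_poly (- p).
Proof. by move=> hp i; rewrite coefN; apply: pdomN. Qed.
Lemma pdom_polyM p q : pdom_poly p -> pdom_poly q -> pdom_poly (p * q).
Proof. by move=> hp hq i; rewrite coefM; apply: pdom_sum => j _; apply: pdomM. Qed.
Lemma pdom_polyC c : pdom c -> pdom_poly c%:P.
Proof. by move=> hc i; rewrite coefC; case: ifP => _ //; apply: pdom0. Qed.
Lemma pdom_polyX : pdom_poly 'X.
Proof. by move=> i; rewrite coefX; case: (i == 1)%N; [apply: pdom1|apply: pdom0]. Qed.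
Lemma pdom_polyXn n : pdom_poly 'X^n.
Proof. by move=> i; rewrite coefXn; case: (i == n)%N; [apply: pdom1|apply: pdom0]. Qed.
Lemma pdom_polyZ c p : pdom c -> pdom_poly p -> pdom_poly (c *: p).
Proof. by move=> hc hp i; rewrite coefZ; apply: pdomM. Qed.
Lemma pdom_poly_deriv p : pdom_poly p -> pdom_poly p^`().
Proof. by move=> hp i; rewrite coef_deriv; apply: pdomMn. Qed.

Lemma pfun_polyD p q : pdom_poly p -> pdom_poly q -> pfun_poly (p + q) = pfun_poly p + pfun_poly q.
Proof. by move=> hp hq; apply/polyP => i; rewrite coefD !coef_pfun_poly coefD pfunD. Qed.
Lemma pfun_polyN p : pdom_poly p -> pfun_poly (- p) = - pfun_poly p.
Proof. by move=> hp; apply/polyP => i; rewrite coefN !coef_pfun_poly coefN pfunN. Qed.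
Lemma pfun_polyM p q : pdom_poly p -> pdom_poly q -> pfun_poly (p * q) = pfun_poly p * pfun_poly q.
Proof.
move=> hp hq; apply/polyP => i; rewrite coef_pfun_poly !coefM.
rewrite pfun_sum; last by move=> j _; apply: pdomM.
by apply: eq_bigr => j _; rewrite pfunM // !coef_pfun_poly.
Qed.
Lemma pfun_polyC c : pdom c -> pfun_poly c%:P = (pfun c)%:P.
Proof.
by move=> hc; apply/polyP => i; rewrite coef_pfun_poly !coefC; case: ifP; rewrite ?pfun0.
Qed.
Lemma pfun_polyX : pfun_poly 'X = 'X.
Proof.
by apply/polyP => i; rewrite coef_pfun_poly !coefX; case: (i == 1)%N; rewrite ?pfun1 ?pfun0.
Qed.

Lemma size_pfun_poly q : q \is monic -> size (pfun_poly q) = size q.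
Proof.
move=> mq; apply/eqP; rewrite eqn_leq size_poly /=.
have sq : (0 < size q)%N by rewrite size_poly_gt0 monic_neq0.
rewrite -[X in (X <= _)%N](prednK sq) ltnNge; apply/negP => /leq_sizeP /(_ _ (leqnn _)).
by rewrite coef_pfun_poly -lead_coefE (monicP mq) pfun1; apply/eqP; exact: oner_neq0.
Qed.

Lemma pdom_poly_divp (q : {poly L}) : pdom_poly q -> q \is monic -> forall p, pdom_poly p ->
  exists s r, [/\ pdom_poly s, pdom_poly r, (size r < size q)%N & p = q * s + r].
Proof.
move=> hq mq; have sq : (0 < size q)%N by rewrite size_poly_gt0 monic_neq0.
move=> p; elim: {p}(size p).+1 {-2}p (ltnSn (size p)) => [|n IH] p // sp hp.
have [hlt|hge] := ltnP (size p) (size q).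
  by exists 0, p; split => //; [exact: pdom_poly0|rewrite mulr0 add0r].
set d := (size p - size q)%N; set m := lead_coef p *: 'X^d.
have hm : pdom_poly m by apply: pdom_polyZ; [rewrite lead_coefE|apply: pdom_polyXn].
set p1 := p - q * m.
have hp1 : pdom_poly p1 by apply: pdom_polyD => //; apply/pdom_polyN/pdom_polyM.
have sp1 : (size p1 <= (size p).-1)%N.
  apply/leq_sizeP => j hj.
  rewrite /p1 coefB /m -scalerAr coefZ coefMXn.
  have -> : (j < d)%N = false by apply/negbTE; rewrite -leqNgt /d; lia.
  have [ej|nej] := eqVneq j (size p).-1.
    have -> : (j - d)%N = (size q).-1 by rewrite ej /d; lia.
    by rewrite -lead_coefE (monicP mq) mulr1 ej -lead_coefE subrr.
  have hj2 : (size p <= j)%N by move: hj nej (leq_trans sq hge) => /leP ? /eqP ? /leP ?; lia.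
  have hjd : (size q <= j - d)%N by rewrite /d; lia.
  by rewrite !nth_default // mulr0 subrr.
have [s1 [r1 [hs1 hr1 sr1 e1]]] : exists s1 r1, [/\ pdom_poly s1, pdom_poly r1,
    (size r1 < size q)%N & p1 = q * s1 + r1].
  by apply: IH hp1; apply: leq_ltn_trans sp1 _; rewrite prednK ?(leq_trans sq hge).
exists (m + s1), r1; split => //; first exact: pdom_polyD.
by rewrite mulrDr -addrA -e1 /p1 addrC subrK.
Qed.

Section MinimalPolynomial.
Variable y : L.

Lemma pdom_minpoly_exists : exists q, [/\ pdom_poly q, q \is monic, root q y &
  forall p, pdom_poly p -> p != 0 -> root p y -> (size q <= size p)%N].
Proof.
have [p0 [p0n rp0]] := algL y.
have hP : exists n, `[< exists p, [/\ pdom_poly p, p != 0, root p y & size p = n] >].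
  exists (size (map_poly iota p0)); apply/asboolP; exists (map_poly iota p0); split => //.
  - by move=> i; rewrite coef_map; apply: pdom_iota.
  - by rewrite map_poly_eq0.
have [n /asboolP [q0 [hq0 q0n rq0 sq0]] minn] := ex_minnP hP.
have c0 : lead_coef q0 != 0 by rewrite lead_coef_eq0.
exists ((lead_coef q0)^-1 *: q0); split.
- by apply: pdom_polyZ => //; apply: pdomV; rewrite lead_coefE; apply: hq0.
- by apply/monicP; rewrite lead_coefZ mulVf.
- by rewrite /root hornerZ (eqP rq0) mulr0.
- move=> p hp pn rp; rewrite size_scale ?invr_eq0 // sq0; apply: minn.
  by apply/asboolP; exists p.
Qed.

Variable q : {poly L}.
Hypotheses (hq : pdom_poly q) (mq : q \is monic) (rq : root q y)
  (qmin : forall p, pdom_poly p -> p != 0 -> root p y -> (size q <= size p)%N).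

Lemma pdom_minpoly_dvd p : pdom_poly p -> root p y -> exists s, pdom_poly s /\ p = q * s.
Proof.
move=> hp rp; have [s [r [hs hr sr e]]] := pdom_poly_divp hq mq hp.
exists s; split => //; suff r0 : r = 0 by rewrite e r0 addr0.
apply/eqP; apply: contraTT sr => rn; rewrite -leqNgt; apply: qmin => //.
have -> : r = p - q * s by rewrite e addrC addKr.
by rewrite /root hornerD hornerN hornerM (eqP rp) (eqP rq) mul0r subrr.
Qed.

(* [y] may be sent to any root [y'] of the transported minimal polynomial,
   via [p(y) |-> (pfun_poly p)(y')]. *)
Lemma partial_khom_extend y' : root (pfun_poly q) y' -> exists G' : L * L -> Prop,
  [/\ partial_khom G', (forall u, G u -> G' u) & G' (y, y')].
Proof.
move=> ry'.
exists (fun uv => exists p, pdom_poly p /\ uv = (p.[y], (pfun_poly p).[y'])); split.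
- split.
  + move=> x y1 y2 [p1 [h1 [e1 e1']]] [p2 [h2 [e2 e2']]].
    have r12 : root (p1 - p2) y by rewrite /root hornerD hornerN -e1 -e2 subrr.
    have [s [hs es]] := pdom_minpoly_dvd (pdom_polyD h1 (pdom_polyN h2)) r12.
    have E : pfun_poly (p1 - p2) = pfun_poly q * pfun_poly s by rewrite es pfun_polyM.
    rewrite (pfun_polyD h1 (pdom_polyN h2)) (pfun_polyN h2) in E.
    apply/eqP; rewrite -subr_eq0 e1' e2' -hornerN -hornerD E hornerM (eqP ry') mul0r.
    by [].
  + move=> a; exists (iota a)%:P; split; first by apply/pdom_polyC/pdom_iota.
    by rewrite pfun_polyC ?pfun_iota ?hornerC //; apply: pdom_iota.
  + move=> x1 y1 x2 y2 [p1 [h1 [e1 e1']]] [p2 [h2 [e2 e2']]]; split.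
    * exists (p1 + p2); split; first exact: pdom_polyD.
      by rewrite pfun_polyD // !hornerD e1 e2 e1' e2'.
    * exists (p1 * p2); split; first exact: pdom_polyM.
      by rewrite pfun_polyM // !hornerM e1 e2 e1' e2'.
- move=> [x v] hxv; have dx : pdom x by exists v.
  exists x%:P; split; first exact: pdom_polyC.
  by rewrite pfun_polyC // !hornerC (pfun_eq hxv).
- by exists 'X; split; [apply: pdom_polyX|rewrite pfun_polyX !hornerX].
Qed.

Lemma root_pfun_minpoly_exists : exists y', root (pfun_poly q) y'.
Proof.
apply/closed_rootP; rewrite size_pfun_poly //.
apply/eqP => /eqP/size_poly1P [c c0 qc].
by move: rq; rewrite qc /root hornerC (negPf c0).
Qed.

Hypothesis charL0 : forall n, ((n%:R : L) == 0) = (n == 0)%N.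

(* In characteristic 0 the minimal polynomial is separable, so unless it is
   linear (and then [y] is already in the domain) it has a second root. *)
Lemma pdom_minpoly_other_root : ~ pdom y -> exists y', root q y' /\ y' != y.
Proof.
move=> hy; have qn0 : q != 0 by apply: monic_neq0.
have /factor_theorem [h qh] := rq.
have sq2 : (1 < size q)%N.
  rewrite ltnNge; apply/negP => /size1_polyC qc.
  by move: qn0 rq; rewrite qc polyC_eq0 /root hornerC => /negPf ->.
have q'n0 : q^`() != 0.
  apply/eqP => /polyP /(_ (size q).-2); rewrite coef_deriv coef0.
  have -> : (size q).-2.+1 = (size q).-1 by move: sq2; case: (size q) => [|[|]].
  rewrite -lead_coefE (monicP mq) -mulr_natl mulr1.
  by move/eqP; rewrite charL0; move: sq2; case: (size q) => [|[|]].
have nrq' : ~~ root q^`() y.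
  apply/negP => r'; have := qmin (pdom_poly_deriv hq) q'n0 r'.
  by rewrite leqNgt lt_size_deriv.
have hy0 : h.[y] != 0.
  move: nrq'; rewrite qh derivM derivXsubC mulr1 /root hornerD hornerM hornerXsubC.
  by rewrite subrr mulr0 add0r.
have sh1 : size h != 1%N.
  apply/eqP => /eqP/size_poly1P [c c0 hc]; apply: hy.
  have c1 : c = 1.
    by move/monicP: mq; rewrite qh hc lead_coefM lead_coefC lead_coefXsubC mulr1.
  have e0 : q`_0 = - y by rewrite qh hc c1 mul1r coefB coefX coefC /= sub0r.
  by rewrite -[y]opprK -e0; apply: pdomN.
have [y' ry'] : exists y', root h y' by apply/closed_rootP.
exists y'; split; first by rewrite qh /root hornerM (eqP ry') mul0r.
by apply: contraNneq hy0 => <-.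
Qed.

End MinimalPolynomial.

End PartialKHom.

Lemma partial_khom_total G : partial_khom G ->
  exists H, [/\ partial_khom H, (forall u, G u -> H u) & forall x, pdom H x].
Proof.
move=> hG.
have chain : forall F : set (set (L * L)),
    (F `<=` (fun A : set (L * L) => partial_khom (A `|` G)))%classic ->
    total_on F subset -> partial_khom ((\bigcup_(X in F) X) `|` G)%classic.
  move=> F FP Ftot; set U := ((\bigcup_(X in F) X) `|` G)%classic.
  have two_in_one u v : U u -> U v -> exists Y : L * L -> Prop,
      [/\ partial_khom Y, Y u, Y v & forall w, Y w -> U w].
    have incl X : F X -> forall w, (X `|` G)%classic w -> U w.
      by move=> FX w [Xw|Gw]; [left; exists X|right].
    move=> [[X1 FX1 Xu]|Gu] [[X2 FX2 Xv]|Gv].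
    - have [s12|s21] := Ftot _ _ FX1 FX2.
      + exists (X2 `|` G)%classic; split; [exact: FP|left; exact: s12|by left|exact: incl].
      + exists (X1 `|` G)%classic; split; [exact: FP|by left|left; exact: s21|exact: incl].
    - by exists (X1 `|` G)%classic; split; [exact: FP|left|right|exact: incl].
    - by exists (X2 `|` G)%classic; split; [exact: FP|right|left|exact: incl].
    - by exists G; split => // w Gw; right.
  split.
  - move=> x y1 y2 h1 h2; have [Y [[fY _ _] Y1 Y2 _]] := two_in_one _ _ h1 h2.
    exact: fY Y1 Y2.
  - by move=> a; right; case: hG.
  - move=> x1 y1 x2 y2 h1 h2; have [Y [[_ _ cY] Y1 Y2 YU]] := two_in_one _ _ h1 h2.
    by have [c1 c2] := cY _ _ _ _ Y1 Y2; split; apply: YU.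
have [A [PA Amax]] := Zorn_bigcup chain.
exists (A `|` G)%classic; split => //; first by move=> u Gu; right.
move=> x; apply: contrapT => hx.
have [q [hq mq rq qmin]] := pdom_minpoly_exists PA x.
have [y' ry'] := root_pfun_minpoly_exists PA mq rq.
have [G' [hG' sub hxy']] := partial_khom_extend PA hq mq rq qmin ry'.
apply: (Amax G').
  split; first by move=> u Au; apply: sub; left.
  by move/(_ _ hxy') => Axy; apply: hx; exists y'; left.
by have -> : (G' `|` G)%classic = G' by apply/setUidPl => u Gu; apply: sub; right.
Qed.

(* Artin: the fixed field of [Gal(L/K)] is [K].  An [x] outside [iota K] has a
   conjugate [y' != x], and [x |-> y'] extends (Zorn) to an automorphism. *)
Theorem gal_fixed_in_K (charL0 : forall n, ((n%:R : L) == 0) = (n == 0)%N) x :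
  (forall s, isGal iota s -> s x = x) -> exists a, x = iota a.
Proof.
move=> hfix; apply: contrapT => hx.
pose G0 uv := exists a, uv = (iota a, iota a).
have hG0 : partial_khom G0.
  split.
  - by move=> u y1 y2 [a [e1 e2]] [b [e3 e4]]; rewrite e2 e4 -e1 -e3.
  - by move=> a; exists a.
  - move=> x1 y1 x2 y2 [a [-> ->]] [b [-> ->]].
    by split; [exists (a + b); rewrite rmorphD|exists (a * b); rewrite rmorphM].
have ndx : ~ pdom G0 x by move=> [y [a [e _]]]; apply: hx; exists a.
have [q [hq mq rq qmin]] := pdom_minpoly_exists hG0 x.
have [y' [ry' ny']] := pdom_minpoly_other_root hG0 hq mq rq qmin charL0 ndx.
have qE : pfun_poly G0 q = q.
  apply/polyP => i; rewrite (coef_pfun_poly hG0); have [v [a [e _]]] := hq i.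
  by rewrite e (pfun_iota hG0).
have ry'' : root (pfun_poly G0 q) y' by rewrite qE.
have [G1 [hG1 _ hxy]] := partial_khom_extend hG0 hq mq rq qmin ry''.
have [H [hH subH totH]] := partial_khom_total hG1.
have hs : isGal iota (pfun H).
  apply: isGal_khom; [move=> u v; exact: pfunD|move=> u v; exact: pfunM|exact: pfun1|].
  exact: pfun_iota.
have := hfix _ hs; rewrite (pfun_eq hH (subH _ hxy)) => e.
by rewrite e eqxx in ny'.
Qed.

End AlgebraicClosure.

Lemma closed_prim_root_exists (L : closedFieldType) n :
  n%:R != 0 :> L -> exists z : L, n.-primitive_root z.
Proof.
move=> n0; have n_gt0 : (0 < n)%N by rewrite lt0n; apply: contraNneq n0 => ->.
pose p : {poly L} := 'X^n - 1; have [r Dp] := closed_field_poly_normal p.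
rewrite (monicP _) ?monicXnsubC // scale1r in Dp.
have rn1 : all n.-unity_root r by apply/allP => z; rewrite -root_prod_XsubC -Dp.
have sz_r : (n < (size r).+1)%N by rewrite -(size_prod_XsubC r id) -Dp size_XnsubC.
have [|z _ zP] := hasP (has_prim_root n_gt0 rn1 _ sz_r); last by exists z.
by rewrite -separable_prod_XsubC -Dp separable_Xn_sub_1.
Qed.

Lemma sum_unity_root_expr (R : idomainType) n (w : R) :
  w ^+ n = 1 -> w != 1 -> \sum_(i < n) w ^+ i = 0.
Proof.
move=> wn w1; have : (w - 1) * \sum_(i < n) w ^+ i = 0 by rewrite -subrX1 wn subrr.
by move/eqP; rewrite mulf_eq0 subr_eq0 (negPf w1) => /eqP.
Qed.

Section Kummer.
Variables (K : fieldType) (L : closedFieldType) (iota : {rmorphism K -> L}).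
Hypothesis algL : algebraic_over iota.

Section GalFacts.
Variable s : L -> L.
Hypothesis gs : isGal iota s.

Lemma galD x y : s (x + y) = s x + s y. Proof. by case: gs. Qed.
Lemma galM x y : s (x * y) = s x * s y. Proof. by case: gs. Qed.
Lemma gal1 : s 1 = 1. Proof. by case: gs. Qed.
Lemma gal_iota a : s (iota a) = iota a. Proof. by case: gs. Qed.
Lemma gal0 : s 0 = 0. Proof. exact: (khom0 gal_iota). Qed.
Lemma galX x n : s (x ^+ n) = s x ^+ n. Proof. exact: (khomX galM gal1). Qed.
Lemma gal_inj : injective s. Proof. exact: (khom_inj galD galM gal1 gal_iota). Qed.
Lemma gal_horner (p : {poly K}) w : s (map_poly iota p).[w] = (map_poly iota p).[s w].
Proof. exact: (khom_horner galD galM gal_iota). Qed.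
Lemma gal_sum (I : Type) (r : seq I) (P : pred I) (F : I -> L) :
  s (\sum_(i <- r | P i) F i) = \sum_(i <- r | P i) s (F i).
Proof. exact: (big_morph s galD gal0). Qed.
Lemma gal_eq0 x : (s x == 0) = (x == 0).
Proof. by rewrite -{1}gal0 (inj_eq gal_inj). Qed.
Lemma galV x : s x^-1 = (s x)^-1.
Proof.
have [->|x0] := eqVneq x 0; first by rewrite invr0 gal0 invr0.
by apply: (mulfI (x := s x)); rewrite ?gal_eq0 // -galM !mulfV ?gal1 ?gal_eq0.
Qed.

End GalFacts.

Lemma gal_comp s t : isGal iota s -> isGal iota t -> isGal iota (s \o t).
Proof.
move=> gs gt; split => /=.
- by move=> x y; rewrite !galD.
- by move=> x y; rewrite !galM.
- by rewrite !gal1.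
- by case: gs => _ _ _ bs _; case: gt => _ _ _ bt _; apply: bij_comp.
- by move=> a; rewrite !gal_iota.
Qed.

Lemma gal_id : isGal iota id.
Proof. by split => //; exists id. Qed.

Lemma gal_inv s : isGal iota s -> exists2 s', isGal iota s' & cancel s' s.
Proof.
move=> gs; case: (gs) => _ _ _ [s' c1 c2] _.
exists s' => //; split.
- by move=> x y; apply: (gal_inj gs); rewrite (galD gs) !c2.
- by move=> x y; apply: (gal_inj gs); rewrite (galM gs) !c2.
- by apply: (gal_inj gs); rewrite c2 (gal1 gs).
- by exists s.
- by move=> a; apply: (gal_inj gs); rewrite c2 (gal_iota gs).
Qed.

Lemma gal_in_Kzeta N y s t : in_Kzeta iota N y -> isGal iota s -> isGal iota t ->
  (forall z, N.-primitive_root z -> s z = t z) -> s y = t y.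
Proof. by move=> [z [pz [p ->]]] gs gt st; rewrite !gal_horner // st. Qed.

Lemma coboundary_cocycle m y a : y != 0 -> y ^+ m = iota a ->
  cocycle iota m (fun s => s y / y).
Proof.
move=> y0 ya; split => [s gs|s t gs gt /=].
  by rewrite expr_div_n -(galX gs) ya (gal_iota gs) -ya divff ?expf_neq0.
have sy0 : s y != 0 by rewrite gal_eq0.
by rewrite /= (galM gs) (galV gs); field; rewrite sy0 y0.
Qed.

Lemma coboundary_continuous y : continuous_coc iota (fun s => s y / y).
Proof. by exists [:: y] => s t _ _ st; rewrite st ?mem_head. Qed.

Lemma coboundary_factors_GN N y : in_Kzeta iota N y -> factors_GN iota N (fun s => s y / y).
Proof.
move=> Ny z pz s t gs gt szt /=; congr (_ / _); apply: (gal_in_Kzeta Ny gs gt) => z' pz'.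
have [k ->] := prim_rootP pz (prim_expr_order pz').
by rewrite (galX gs) (galX gt) szt.
Qed.

Hypothesis charL0 : forall n, ((n%:R : L) == 0) = (n == 0)%N.

Lemma eigen_pow_in_K m (g : (L -> L) -> L) w :
  (forall s, isGal iota s -> g s ^+ m = 1) ->
  (forall s, isGal iota s -> s w = g s * w) -> exists a, w ^+ m = iota a.
Proof.
move=> gm sw; apply: (gal_fixed_in_K algL charL0) => s gs.
by rewrite (galX gs) sw // exprMn gm ?mul1r.
Qed.

Lemma in_Kzeta_mul_unity N y w : in_Kzeta iota N y -> w ^+ N = 1 -> in_Kzeta iota N (y * w).
Proof.
move=> [z [pz [p ->]]] wN; have [k ->] := prim_rootP pz wN.
by exists z; split => //; exists (p * 'X^k); rewrite rmorphM /= map_polyXn hornerM hornerXn.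
Qed.

Section Resolvent.
Variables (N : nat) (z : L).
Hypothesis pz : N.-primitive_root z.

Let N_gt0 : (0 < N)%N := prim_order_gt0 pz.

Definition in_Kz y := exists p : {poly K}, y = (map_poly iota p).[z].

Lemma in_Kz_in_Kzeta y : in_Kz y -> in_Kzeta iota N y.
Proof. by move=> [p ->]; exists z; split => //; exists p. Qed.

Lemma in_Kz_iota a : in_Kz (iota a).
Proof. by exists a%:P; rewrite map_polyC hornerC. Qed.
Lemma in_Kz_add x y : in_Kz x -> in_Kz y -> in_Kz (x + y).
Proof. by move=> [p ->] [q ->]; exists (p + q); rewrite rmorphD hornerD. Qed.
Lemma in_Kz_mul x y : in_Kz x -> in_Kz y -> in_Kz (x * y).
Proof. by move=> [p ->] [q ->]; exists (p * q); rewrite rmorphM hornerM. Qed.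
Lemma in_Kz_zexp n : in_Kz (z ^+ n).
Proof. by exists 'X^n; rewrite map_polyXn hornerXn. Qed.
Lemma in_Kz_unity x : x ^+ N = 1 -> in_Kz x.
Proof. by move=> /(prim_rootP pz) [i ->]; apply: in_Kz_zexp. Qed.
Lemma in_Kz_sum (I : Type) (r : seq I) (P : pred I) (F : I -> L) :
  (forall i, P i -> in_Kz (F i)) -> in_Kz (\sum_(i <- r | P i) F i).
Proof.
by move=> h; apply: big_ind => //; [rewrite -(rmorph0 iota); exact: in_Kz_iota|exact: in_Kz_add].
Qed.

Variable f : (L -> L) -> L.
Hypotheses (hf : cocycle iota N f)
  (fz : forall s t, isGal iota s -> isGal iota t -> s z = t z -> f s = f t).

Let fN : forall s, isGal iota s -> f s ^+ N = 1 := proj1 hf.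

Lemma cocycle_neq0 s : isGal iota s -> f s != 0.
Proof.
by move=> gs; apply: contra_eq_neq (fN gs) => ->; rewrite expr0n gtn_eqF // eq_sym oner_eq0.
Qed.

(* [(f r)^-1] for any [r] with [r z = z ^+ k]; well defined as [f] factors
   through [r z], and [0] when no such [r] exists. *)
Definition cocycle_inv_at (k : nat) : L :=
  xget 0 (fun c => exists r, [/\ isGal iota r, r z = z ^+ k & c = (f r)^-1]).

Lemma cocycle_inv_atE r k : isGal iota r -> r z = z ^+ k -> cocycle_inv_at k = (f r)^-1.
Proof.
move=> gr erz; rewrite /cocycle_inv_at.
case: xgetP => [c _ [r' [gr' erz' ->]]|/(_ (f r)^-1) []]; last by exists r.
by rewrite (fz gr' gr) // erz erz'.
Qed.

Lemma cocycle_inv_at0 k : ~ (exists r, isGal iota r /\ r z = z ^+ k) -> cocycle_inv_at k = 0.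
Proof.
by move=> h; rewrite /cocycle_inv_at; case: xgetP => // c _ [r [gr erz _]]; case: h; exists r.
Qed.

Lemma in_Kz_cocycle_inv_at k : in_Kz (cocycle_inv_at k).
Proof.
have [[r [gr erz]]|h] := pselect (exists r, isGal iota r /\ r z = z ^+ k).
  by rewrite (cocycle_inv_atE gr erz); apply: in_Kz_unity; rewrite exprVn (fN gr) invr1.
by rewrite cocycle_inv_at0 // -(rmorph0 iota); exact: in_Kz_iota.
Qed.

Lemma gal_cocycle_inv_at s j k : isGal iota s -> s z = z ^+ j ->
  s (cocycle_inv_at k) = f s * cocycle_inv_at (j * k %% N).
Proof.
move=> gs ej.
have [[r [gr erz]]|nr] := pselect (exists r, isGal iota r /\ r z = z ^+ k).
  have e2 : (s \o r) z = z ^+ (j * k %% N).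
    by rewrite /= erz (galX gs) ej (prim_expr_mod pz) exprM.
  rewrite (cocycle_inv_atE gr erz) (cocycle_inv_atE (gal_comp gs gr) e2) (galV gs).
  by rewrite (proj2 hf) // invfM mulrA mulfV ?mul1r ?cocycle_neq0.
rewrite cocycle_inv_at0 // (gal0 gs) cocycle_inv_at0 ?mulr0 // => -[r [gr erz]]; apply: nr.
have [s' gs' ss'] := gal_inv gs; exists (s' \o r); split; first exact: gal_comp.
by apply: (gal_inj gs); rewrite /= ss' erz (galX gs) ej (prim_expr_mod pz) exprM.
Qed.

Definition resolvent (i : nat) : L := \sum_(k < N) cocycle_inv_at k * z ^+ (k * i).

Lemma in_Kz_resolvent i : in_Kz (resolvent i).
Proof.
by apply: in_Kz_sum => k _; apply: in_Kz_mul; [apply: in_Kz_cocycle_inv_at|apply: in_Kz_zexp].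
Qed.

(* [s] acts on the summation index as [k |-> j k mod N], where [s z = z ^+ j]. *)
Lemma gal_resolvent s i : isGal iota s -> s (resolvent i) = f s * resolvent i.
Proof.
move=> gs; have [j ej] : {j : 'I_N | s z = z ^+ j}.
  by apply: (prim_rootP pz); rewrite -(galX gs) (prim_expr_order pz) (gal1 gs).
pose h (k : 'I_N) : 'I_N := Ordinal (ltn_pmod (j * k) N_gt0).
have zh (k : nat) : z ^+ (j * k %% N) = s (z ^+ k).
  by rewrite (prim_expr_mod pz) (galX gs) ej -exprM.
have h_inj : injective h.
  move=> k1 k2 /(congr1 val) /= e.
  have /(gal_inj gs)/eqP : s (z ^+ k1) = s (z ^+ k2) by rewrite -!zh e.
  by rewrite (eq_prim_root_expr pz) !modn_small // => /eqP /val_inj.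
rewrite /resolvent (gal_sum gs) mulr_sumr [RHS](reindex_inj h_inj) /=.
apply: eq_bigr => k _; rewrite (galM gs) (gal_cocycle_inv_at k gs ej) -mulrA.
congr (_ * (_ * _)); by rewrite [RHS]exprM zh -(galX gs) -exprM.
Qed.

(* Orthogonality of characters: [\sum_i z^-i resolvent i = N / f(s_1)], where [s_1 z = z]. *)
Lemma resolvent_neq0 : exists i, resolvent i != 0.
Proof.
pose k1 : 'I_N := Ordinal (ltn_pmod 1 N_gt0).
have z0 : z != 0 by rewrite (prim_root_eq0 pz) -lt0n.
have zk1 : z ^+ k1 = z by rewrite /= (prim_expr_mod pz) expr1.
have sum_res : \sum_(i < N) z^-1 ^+ i * resolvent i = cocycle_inv_at k1 *+ N.
  rewrite /resolvent; under eq_bigr do rewrite mulr_sumr.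
  rewrite exchange_big (bigD1 k1) //= addrC big1 ?add0r => [|k nk].
    rewrite (eq_bigr (fun _ => cocycle_inv_at k1)) ?sumr_const ?card_ord // => i _.
    by rewrite mulrCA exprM zk1 -exprMn mulVf // expr1n mulr1.
  have w1 : z^-1 * z ^+ k != 1.
    apply: contraNneq nk => e; apply/eqP/val_inj/eqP => /=.
    have : z ^+ k = z ^+ k1 by rewrite zk1; apply: (mulfI (invr_neq0 z0)); rewrite e mulVf.
    by move/eqP; rewrite (eq_prim_root_expr pz) modn_mod modn_small.
  have wN : (z^-1 * z ^+ k) ^+ N = 1.
    by rewrite exprMn exprVn -exprM mulnC exprM (prim_expr_order pz) expr1n invr1 mul1r.
  rewrite (eq_bigr (fun i : 'I_N => cocycle_inv_at k * (z^-1 * z ^+ k) ^+ i)) => [|i _].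
    by rewrite -mulr_sumr sum_unity_root_expr // mulr0.
  by rewrite mulrCA exprM exprMn.
have c1 : cocycle_inv_at k1 = (f id)^-1 by apply: cocycle_inv_atE; [exact: gal_id|rewrite zk1].
apply: contrapT => /forallNP res0.
have : cocycle_inv_at k1 *+ N != 0.
  rewrite -mulr_natr mulf_neq0 ?charL0 -?lt0n // c1 invr_neq0 //.
  exact: (cocycle_neq0 gal_id).
rewrite -sum_res big1 ?eqxx // => i _.
by move/negP: (res0 i); rewrite negbK => /eqP ->; rewrite mulr0.
Qed.

Lemma cocycle_hilbert90 :
  exists b, [/\ b != 0, in_Kz b & forall s, isGal iota s -> s b = f s * b].
Proof.
have [i bi] := resolvent_neq0; exists (resolvent i); split => //.
  exact: in_Kz_resolvent.
by move=> s gs; apply: gal_resolvent.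
Qed.

End Resolvent.

Lemma CB_prop_cohom M n f : CB_prop iota M -> (0 < n)%N ->
  cocycle iota (M * n) f -> factors_GN iota (M * n) f ->
  exists g, [/\ cocycle iota M g, continuous_coc iota g,
              factors_GN iota (M * n) g & cohom iota (M * n) f g].
Proof.
move=> [M_gt0 hCB] n_gt0 hf hfac; set N := (M * n)%N.
have N0 : N%:R != 0 :> L by rewrite charL0 -lt0n muln_gt0 M_gt0 n_gt0.
have [z pz] := closed_prim_root_exists N0.
have [b [b0 Kzb sb]] := cocycle_hilbert90 pz hf (hfac z pz).
have [a ba] := eigen_pow_in_K (proj1 hf) sb.
have [c ac] := hCB n n_gt0 b a (in_Kz_in_Kzeta pz Kzb) b0 ba.
have c0 : iota c != 0.
  by apply: contra_neq (expf_neq0 N b0) => c0; rewrite ba ac rmorphXn c0 expr0n gtn_eqF.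
have pzM : n.-primitive_root (z ^+ M).
  by have := dvdn_prim_root pz (dvdn_mull M (dvdnn n)); rewrite /N mulnK.
have [e eM] : exists e, b ^+ M / iota c = (z ^+ e) ^+ M.
  have : (b ^+ M / iota c) ^+ n = 1.
    by rewrite expr_div_n -exprM ba ac rmorphXn divff // expf_neq0.
  by case/(prim_rootP pzM) => e ->; exists e; rewrite exprAC.
set eta := z ^+ e.
have etaN : eta ^+ N = 1 by rewrite exprAC (prim_expr_order pz) expr1n.
have eta0 : eta != 0 by rewrite expf_neq0 // (prim_root_eq0 pz) -lt0n (prim_order_gt0 pz).
set d := b / eta.
have d0 : d != 0 by rewrite mulf_neq0 ?invr_eq0.
have dM : d ^+ M = iota c by rewrite expr_div_n -eM; field; rewrite c0 expf_neq0.
have Nd : in_Kzeta iota N d.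
  by apply: in_Kzeta_mul_unity; [exact: (in_Kz_in_Kzeta pz Kzb)|rewrite exprVn etaN invr1].
exists (fun s => s d / d); split.
- exact: coboundary_cocycle d0 dM.
- exact: coboundary_continuous.
- exact: coboundary_factors_GN.
- exists eta; split => // s gs.
  have -> : f s = s b / b by rewrite sb // mulfK.
  rewrite -[b](divfK eta0) -/d (galM gs); field.
  by rewrite d0 eta0.
Qed.

Lemma cohom_CB_prop M : (0 < M)%N ->
  (forall n, (0 < n)%N -> forall f, cocycle iota (M * n) f -> factors_GN iota (M * n) f ->
     exists g, cocycle iota M g /\ cohom iota (M * n) f g) ->
  CB_prop iota M.
Proof.
move=> M_gt0 hM; split => // n n_gt0 y a Ny y0 ya.
have [g [[gM _] [c [cN fg]]]] :=
  hM n n_gt0 _ (coboundary_cocycle y0 ya) (coboundary_factors_GN Ny).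
have c0 : c != 0.
  apply: contra_eq_neq cN => ->.
  by rewrite expr0n gtn_eqF ?muln_gt0 ?M_gt0 // eq_sym oner_eq0.
have [b yb] : exists b, (y / c) ^+ M = iota b.
  apply: (eigen_pow_in_K gM) => s gs.
  have sc0 : s c != 0 by rewrite gal_eq0.
  have sy : s y = g s * (s c / c) * y by rewrite -(fg s gs) /= divfK.
  by rewrite (galM gs) (galV gs) sy; field; rewrite sc0 c0.
exists b; apply: (fmorph_inj iota).
by rewrite -ya rmorphXn -yb -exprM -{1}[y](divfK c0) exprMn cN mulr1.
Qed.

End Kummer.

Theorem lemma2p1 (K : fieldType) (L : closedFieldType)
  (iota : {rmorphism K -> L})
  (charK : [pchar K] =i pred0)
  (algL : algebraic_over iota)
  (hKab : Kab_finite iota)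
  (Lam : nat) (hLam : is_CB_number iota Lam) :
  (prop_i iota Lam /\ forall M : nat, prop_i iota M -> (Lam <= M)%N) /\
  (prop_ii iota Lam /\ forall M : nat, prop_ii iota M -> (Lam <= M)%N).
Proof.
have charL0 n : ((n%:R : L) == 0) = (n == 0)%N.
  by rewrite -(rmorph_nat iota) fmorph_eq0; apply: ((pcharf0P K).1 charK).
have [hCB minL] := hLam; have Lam_gt0 : (0 < Lam)%N by case: hCB.
split; split.
- split => // n n_gt0 f hf hfac.
  have [g [gc gcont _ fg]] := CB_prop_cohom algL charL0 hCB n_gt0 hf hfac.
  by exists g.
- move=> M [M_gt0 hM]; apply/minL/(cohom_CB_prop algL charL0 M_gt0) => n n_gt0 f hf hfac.
  by have [g [[gc _] fg]] := hM n n_gt0 f hf hfac; exists g.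
- split => // n n_gt0 f hf hfac.
  by have [g [gc _ gf fg]] := CB_prop_cohom algL charL0 hCB n_gt0 hf hfac; exists g.
- move=> M [M_gt0 hM]; apply/minL/(cohom_CB_prop algL charL0 M_gt0) => n n_gt0 f hf hfac.
  by have [g [gc _ fg]] := hM n n_gt0 f hf hfac; exists g.
Qed.
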